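(* Let $c\ge2$ and let $\Gamma=(V,E)$ be a $c$-uniform unoriented hypergraph with $E\ne\varnothing$ and no isolated vertices, with smallest normalized Laplacian eigenvalue $\lambda_1$ and strong coloring number $\chi$. If $\chi=\dfrac{c-\lambda_1}{1-\lambda_1}$, then for every proper strong $\chi$-coloring with color classes $V_1,\dots,V_\chi$, for all $v\in V$ and all $1\le i\le\chi$, \[ \bigl|\{e\in E: v\in e,\ e\cap V_i\neq\varnothing\}\bigr|=\begin{cases}\dfrac{(c-1)\deg v}{\chi-1}, & v\notin V_i,\\[2mm] \deg v, & v\in V_i.\end{cases} \]
   Context: A hypergraph has finite vertex set $V$ and edge set $E\subseteq\mathcal P(V)$; it is $c$-uniform if $|e|=c$ for all $e$, and unoriented means all incidences have orientation $+1$. $\deg v=|\{e\in E: v\in e\}|\ge1$, $D=\mathrm{diag}(\deg v)$, adjacency $A_{v,v}=0$ and $A_{v,w}=-|\{e\in E: v,w\in e\}|$ for $v\ne w$, normalized Laplacian $L=\mathrm{Id}-D^{-1}A$ with eigenvalues $\lambda_1\le\dots\le\lambda_N$. A proper strong $k$-coloring is a map $V\to\{1,\dots,k\}$ such that any two distinct vertices in a common edge receive different colors; $\chi$ is the least such $k$. *)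

From mathcomp Require Import all_boot all_order all_algebra.
Set Implicit Arguments. Unset Strict Implicit. Unset Printing Implicit Defensive.
Import Order.TTheory GRing.Theory Num.Theory.
Local Open Scope ring_scope.

Section Hyper.
Variable n : nat.
Implicit Types (E : {set {set 'I_n}}) (v w : 'I_n).

Definition hdeg E v : nat := #|[set e in E | v \in e]|.

Definition hcommon E v w : nat := #|[set e in E | (v \in e) && (w \in e)]|.

Definition uniform E (c : nat) : Prop := forall e, e \in E -> #|e| = c.

Variable R : fieldType.

Definition hdegmx E : 'M[R]_n := diag_mx (\row_v ((hdeg E v)%:R : R)).

(* adjacency: A_{v,v} = 0, A_{v,w} = - #{e : v,w in e} for v <> w
   (unoriented hypergraph: all incidence orientations +1) *)
Definition hadj E : 'M[R]_n :=
  \matrix_(v, w) (if v == w then 0 else - ((hcommon E v w)%:R : R)).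

Definition hlaplacian E : 'M[R]_n := 1%:M - invmx (hdegmx E) *m hadj E.

End Hyper.

Definition proper_strong n (E : {set {set 'I_n}}) k (f : {ffun 'I_n -> 'I_k}) : bool :=
  [forall e in E, forall x in e, forall y in e, (x != y) ==> (f x != f y)].

Lemma exists_strong_coloring n (E : {set {set 'I_n}}) :
  exists k, [exists f : {ffun 'I_n -> 'I_k}, proper_strong E f].
Proof.
exists n; apply/existsP; exists [ffun x => x].
apply/forallP => e; apply/implyP => _; apply/forallP => x; apply/implyP => _.
apply/forallP => y; apply/implyP => _; apply/implyP.
by rewrite !ffunE.
Qed.

Definition strong_chi n (E : {set {set 'I_n}}) : nat := ex_minn (exists_strong_coloring E).

(* Write W for the matrix of common-edge counts, so that L = I + D^-1 W and
   mu := lambda_1 - 1 bounds the spectrum of the symmetric matrix D^-1/2 W D^-1/2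
   from below; hence W - mu D is positive semidefinite.  For a proper strong
   chi-coloring let xi_j be the indicator of the class V_j minus 1/chi.  W vanishes
   between vertices of equal colour and has row sums (c-1) deg v, and a computation
   at each vertex shows that the quadratic forms of W - mu D at the xi_j add up to
   -(c - 1 + mu (chi - 1)) (sum of degrees) / chi, which is 0 exactly when
   chi = (c - lambda_1)/(1 - lambda_1).  So every xi_j lies in the kernel of
   W - mu D, and reading off the v-th coordinate of (W - mu D) xi_j gives the number
   of edges at v meeting V_j. *)

From mathcomp Require Import all_boot all_order all_algebra.
From mathcomp Require Import reals.
From mathcomp.real_closed Require Import complex.
From mathcomp Require Import ring lra.
Import Order.TTheory GRing.Theory Num.Theory.
Set Implicit Arguments. Unset Strict Implicit. Unset Printing Implicit Defensive.
Local Open Scope ring_scope.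

Lemma eigenvalue_conj_unit (F : fieldType) n (V A : 'M[F]_n) a :
  V \in unitmx -> eigenvalue A a -> eigenvalue (invmx V *m A *m V) a.
Proof.
move=> Vu /eigenvalueP [x xA x0]; apply/eigenvalueP; exists (x *m V).
  by rewrite !mulmxA mulmxK // xA scalemxAl.
by rewrite mulmx_free_eq0 ?row_free_unit.
Qed.

Lemma psd_quad_eq0_mulmx (R : realFieldType) n (M : 'M[R]_n) :
  M^T = M -> (forall z : 'rV_n, 0 <= (z *m M *m z^T) 0 0) ->
  forall x : 'rV_n, (x *m M *m x^T) 0 0 = 0 -> x *m M = 0.
Proof.
move=> Msym M_psd x qx0; set y := x *m M.
pose a := (y *m y^T) 0 0; pose b := (y *m M *m y^T) 0 0.
have yMx : (y *m M *m x^T) 0 0 = a.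
  have -> : (y *m M *m x^T) 0 0 = ((y *m M *m x^T)^T) 0 0 by rewrite [RHS]mxE.
  by rewrite /a /y !trmx_mul trmxK Msym !mulmxA.
have qD t : ((x + t *: y) *m M *m (x + t *: y)^T) 0 0 = t * (2 * a) + t ^+ 2 * b.
  rewrite linearD linearZ /= !mulmxDl !mulmxDr -!scalemxAl -!scalemxAr.
  rewrite ![(_ + _ : 'M_1) 0 0]mxE ![(_ *: _ : 'M_1) 0 0]mxE qx0 yMx.
  by rewrite -/y -/a -/b; ring.
(* qD is negative at t = -a/(b+1) unless a = |y|^2 vanishes. *)
have a0 : a = 0.
  have b_ge0 : 0 <= b := M_psd y.
  have b1_gt0 : 0 < b + 1 by rewrite ltr_wpDl.
  have := M_psd (x + (- a / (b + 1)) *: y); rewrite qD.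
  have -> : - a / (b + 1) * (2 * a) + (- a / (b + 1)) ^+ 2 * b
            = - (a ^+ 2 * (b + 2)) / (b + 1) ^+ 2.
    by field; rewrite gt_eqF.
  rewrite pmulr_lge0 ?invr_gt0 ?exprn_gt0 // oppr_ge0 pmulr_lle0 ?ltr_wpDl //.
  by move=> a2_le0; apply/eqP; rewrite -sqrf_eq0 eq_le a2_le0 sqr_ge0.
clearbody y; apply/rowP => j; move: a0; rewrite /a mxE => /psumr_eq0P y_sq0.
have y_sq_ge0 (i : 'I_n) : 0 <= y 0 i * y^T i 0 by rewrite mxE -expr2 sqr_ge0.
have /eqP := y_sq0 (fun i _ => y_sq_ge0 i) j isT.
by rewrite !mxE mulf_eq0 orbb => /eqP.
Qed.

Lemma eigenvalue_add_scalar (F : fieldType) n (A : 'M[F]_n) a s :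
  eigenvalue A s -> eigenvalue (a%:M + A) (a + s).
Proof.
move=> /eigenvalueP [x xA x0]; apply/eigenvalueP; exists x => //.
by rewrite mulmxDr mul_mx_scalar xA scalerDl.
Qed.

Section SpectralBound.
Local Open Scope sesquilinear_scope.

Lemma eigenvalue_spectral_diag (C : numClosedFieldType) n (A : 'M[C]_n) j :
  A \is normalmx -> eigenvalue A (spectral_diag A 0 j).
Proof.
move=> /orthomx_spectralP; set P := spectralmx A; set d := spectral_diag A => AE.
have Pu : P \in unitmx := spectral_unit A.
apply/eigenvalueP; exists (row j P); rewrite -?row_mul.
  have -> : P *m A = diag_mx d *m P by rewrite {1}AE !mulmxA mulmxV // mul1mx.
  by rewrite row_mul row_diag_mx -scalemxAl -rowE.
apply/eqP => Pj0.
have := congr1 (fun M => row j M 0 j) (mulmxV Pu).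
by rewrite /= row_mul Pj0 mul0mx !mxE eqxx => /eqP; rewrite eq_sym oner_eq0.
Qed.

Lemma quad_diag_conj (C : numClosedFieldType) n (y d : 'rV[C]_n) :
  (y *m diag_mx d *m y^t*) 0 0 = \sum_j d 0 j * (y 0 j * (y 0 j)^*).
Proof.
rewrite mul_mx_diag mxE; apply: eq_bigr => j _; rewrite !mxE; ring.
Qed.

Variable R : rcfType.
Local Notation toC := (real_complex R).

Lemma quad_ge_eigen_lb n (S : 'M[R]_n) (mu : R) :
  S^T = S -> (forall s, eigenvalue S s -> mu <= s) ->
  forall z : 'rV[R]_n, mu * (z *m z^T) 0 0 <= (z *m S *m z^T) 0 0.
Proof.
(* Over C the spectral theorem writes the form as \sum_j d_j |y_j|^2, where the
   d_j are real eigenvalues of S. *)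
move=> Ssym Smu z.
pose SC := map_mx toC S; pose zC := map_mx toC z.
have SCherm : SC \is hermsymmx.
  apply: realsym_hermsym.
    by apply/is_hermitianmxP; rewrite expr0 scale1r map_mx_id // map_trmx Ssym.
  by apply/mxOverP => i j; rewrite mxE; apply/complex_realP; exists (S i j).
have /orthomx_spectralP := hermitian_normalmx SCherm.
set P := spectralmx SC; set d := spectral_diag SC => SCE.
have Pu : P \is unitarymx := spectral_unitarymx SC.
have d_ge j : toC mu <= d 0 j.
  have /complex_realP [r dr] : d 0 j \is Num.real.
    by move/mxOverP: (hermitian_spectral_diag_real SCherm); apply.
  have := eigenvalue_spectral_diag j (hermitian_normalmx SCherm).
  by rewrite -/d dr eigenvalue_map lecR; apply: Smu.
have zCt : zC^T = zC^t*.
  by rewrite realmxC //; apply/mxOverP => i j; rewrite !mxE;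
    apply/complex_realP; exists (z j i).
pose y := zC *m P^t*.
have yt : P *m zC^t* = y^t* by rewrite /y trmx_mul map_mxM trmxCK.
have toC_quad (M : 'M[R]_n) : toC ((z *m M *m z^T) 0 0)
    = (zC *m map_mx toC M *m zC^t*) 0 0.
  by rewrite -zCt /zC map_trmx -!map_mxM [RHS]mxE.
have -> : z *m z^T = z *m 1%:M *m z^T by rewrite mulmx1.
rewrite -lecR rmorphM /= !toC_quad map_mx1 mulmx1 -/SC.
rewrite SCE invmx_unitary // !mulmxA -/y -mulmxA yt quad_diag_conj.
have -> : zC *m zC^t* = y *m y^t*.
  by rewrite -yt /y !mulmxA -(mulmxA zC) (mulmx1C (unitarymxP Pu)) mulmx1.
rewrite mxE mulr_sumr; apply: ler_sum => j _; rewrite !mxE.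
by apply: ler_wpM2r; [apply: mul_conjC_ge0 | apply: d_ge].
Qed.
End SpectralBound.

Section PositiveDiagonalWeights.
Variables (R : rcfType) (n : nat) (d : 'rV[R]_n).
Hypothesis d_gt0 : forall v, 0 < d 0 v.

Let sqrt_d : 'M[R]_n := diag_mx (\row_v Num.sqrt (d 0 v)).

Let sqrt_d_unit : sqrt_d \in unitmx.
Proof.
rewrite unitmxE det_diag unitfE prodf_seq_neq0.
by apply/allP => v _; rewrite mxE gt_eqF ?sqrtr_gt0.
Qed.

Let sqrt_d_sym : sqrt_d^T = sqrt_d.
Proof. exact: tr_diag_mx. Qed.

Let sqrt_dK : sqrt_d *m sqrt_d = diag_mx d.
Proof.
rewrite mulmx_diag; congr diag_mx; apply/rowP => v.
by rewrite !mxE -expr2 sqr_sqrtr // ltW.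
Qed.

Lemma quad_sub_diag_ge0 (W : 'M[R]_n) (mu : R) : W^T = W ->
  (forall s, eigenvalue (invmx (diag_mx d) *m W) s -> mu <= s) ->
  forall x : 'rV[R]_n, 0 <= (x *m (W - mu *: diag_mx d) *m x^T) 0 0.
Proof.
move=> Wsym Wmu x; set T := invmx sqrt_d.
have Tsym : T^T = T by rewrite /T trmx_inv sqrt_d_sym.
have dT : diag_mx d *m (T *m T) = 1%:M.
  by rewrite /T -sqrt_dK !mulmxA mulmxK // mulmxV.
have dinv : invmx (diag_mx d) = T *m T.
  have [d_unit _] := mulmx1_unit dT.
  by rewrite -[LHS]mulmx1 -dT mulKmx.
(* T W T is symmetric and conjugate to D^-1 W by sqrt_d. *)
have S_eig s : eigenvalue (T *m W *m T) s -> mu <= s.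
  move=> /(eigenvalue_conj_unit sqrt_d_unit) Ss; apply: Wmu.
  by rewrite dinv -mulmxA; move: Ss; rewrite /T !mulmxA mulmxKV.
have S_sym : (T *m W *m T)^T = T *m W *m T by rewrite !trmx_mul Tsym Wsym mulmxA.
have := quad_ge_eigen_lb S_sym S_eig (x *m sqrt_d).
rewrite trmx_mul sqrt_d_sym !mulmxA -(mulmxA x) sqrt_dK.
rewrite -(mulmxA (x *m sqrt_d)) (mulmxA _ T) (mulmxK sqrt_d_unit).
rewrite /T mulmxKV // -subr_ge0 => /le_trans; apply.
rewrite mulmxBr mulmxBl -scalemxAr -scalemxAl.
by rewrite [(_ - _ : 'M_1) 0 0]mxE [(- _ : 'M_1) 0 0]mxE [(_ *: _ : 'M_1) 0 0]mxE.
Qed.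
End PositiveDiagonalWeights.

Lemma sum_centered_indicator (F : fieldType) k (j0 : 'I_k) (g : 'I_k -> F) m :
  k%:R != 0 :> F -> g j0 = 0 ->
  \sum_j ((j0 == j)%:R - k%:R^-1) *
         (g j - k%:R^-1 * \sum_i g i - m * ((j0 == j)%:R - k%:R^-1))
    = - (\sum_i g i + m * (k%:R - 1)) / k%:R.
Proof.
move=> k_neq0 gj0; set G := \sum_i g i.
have sum_other : \sum_(j | j != j0) g j = G by rewrite /G [RHS](bigD1 j0) //= gj0 add0r.
have km1 : (k.-1)%:R = k%:R - 1 :> F.
  by rewrite -subn1 natrB // (leq_ltn_trans (leq0n j0) (ltn_ord j0)).
rewrite (bigD1 j0) //= eqxx gj0.
rewrite (eq_bigr (fun j => - k%:R^-1 * g j + k%:R^-2 * (G - m))); last first.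
  by move=> j; rewrite eq_sym => /negbTE -> /=; field.
rewrite big_split -mulr_sumr sum_other sumr_const cardC1 card_ord.
rewrite -[_ *+ k.-1]mulr_natr km1 /=.
by field.
Qed.

Definition hcolor_deg n (E : {set {set 'I_n}}) k (f : {ffun 'I_n -> 'I_k}) v j : nat :=
  #|[set e in E | (v \in e) && [exists w in e, f w == j]]|.

Section HypergraphCounting.
Local Open Scope nat_scope.
Variables (n : nat) (E : {set {set 'I_n}}).

Lemma card_set_in_sum (P : pred {set 'I_n}) :
  #|[set e in E | P e]| = \sum_(e in E) P e.
Proof.
rewrite -sum1_card big_mkcond [RHS]big_mkcond; apply: eq_bigr => e _.
by rewrite inE; case: (e \in E); case: (P e).
Qed.

Lemma hcommonC v w : hcommon E v w = hcommon E w v.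
Proof. by apply: eq_card => e; rewrite !inE (andbC (v \in e)). Qed.

Lemma sum_hcommon c v : uniform E c ->
  \sum_(w | w != v) hcommon E v w = (c - 1) * hdeg E v.
Proof.
move=> unifE; rewrite /hdeg card_set_in_sum big_distrr /=.
under eq_bigr => w _ do rewrite /hcommon card_set_in_sum.
rewrite exchange_big /=; apply: eq_bigr => e eE.
case ve: (v \in e) => /=; last by rewrite muln0 big1.
rewrite muln1 -(unifE e eE) (cardsD1 v e) ve add1n subSS subn0 -sum1_card.
rewrite big_mkcond [RHS]big_mkcond; apply: eq_bigr => w _.
by rewrite !inE; case: (_ != _); case: (_ \in _).
Qed.

Variables (k : nat) (f : {ffun 'I_n -> 'I_k}).
Hypothesis f_proper : proper_strong E f.

Lemma proper_strongP e x y : e \in E -> x \in e -> y \in e -> x != y -> f x != f y.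
Proof.
move=> eE xe ye; move/forallP/(_ e): f_proper; rewrite eE /=.
by move=> /forallP/(_ x); rewrite xe /= => /forallP/(_ y); rewrite ye /= => /implyP.
Qed.

Lemma hcommon_same_color v w : v != w -> f v = f w -> hcommon E v w = 0.
Proof.
move=> vw fvw; rewrite /hcommon card_set_in_sum big1 // => e eE.
case ve: (v \in e); case we: (w \in e) => //=.
by move: (proper_strongP eE ve we vw); rewrite fvw eqxx.
Qed.

Lemma sum_hcommon_color v j : f v != j ->
  \sum_(w | f w == j) hcommon E v w = hcolor_deg E f v j.
Proof.
move=> fvj; rewrite /hcolor_deg card_set_in_sum.
under eq_bigr => w _ do rewrite /hcommon card_set_in_sum.
rewrite exchange_big /=; apply: eq_bigr => e eE.
case ve: (v \in e) => /=; last by rewrite big1.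
case: existsP => [[w0 /andP[w0e fw0]]|no_w]; last first.
  by rewrite big1 // => w fw; case we: (w \in e) => //; case: no_w; exists w; rewrite we.
rewrite (bigD1 w0) //= w0e big1 // => w /andP[fw ww0].
case we: (w \in e) => //; move: (proper_strongP eE we w0e ww0).
by rewrite (eqP fw) (eqP fw0) eqxx.
Qed.

Lemma hcolor_deg_self v : hcolor_deg E f v (f v) = hdeg E v.
Proof.
apply: eq_card => e; rewrite !inE; case: (e \in E) => //=.
by case ve: (v \in e) => //=; apply/existsP; exists v; rewrite ve eqxx.
Qed.
End HypergraphCounting.

Section HypergraphMatrices.
Variables (R : fieldType) (n : nat) (E : {set {set 'I_n}}).

Definition hcommon_mx : 'M[R]_n :=
  \matrix_(v, w) (if v == w then 0 else (hcommon E v w)%:R).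

Lemma tr_hcommon_mx : hcommon_mx^T = hcommon_mx.
Proof. by apply/matrixP => v w; rewrite !mxE eq_sym hcommonC. Qed.

Lemma hlaplacianE : hlaplacian R E = 1%:M + invmx (hdegmx R E) *m hcommon_mx.
Proof.
rewrite /hlaplacian (_ : hadj R E = - hcommon_mx) ?mulmxN ?opprK //.
by apply/matrixP => v w; rewrite !mxE; case: (v == w); rewrite ?oppr0.
Qed.

Lemma mul_hdegmx (x : 'rV[R]_n) v : (x *m hdegmx R E) 0 v = x 0 v * (hdeg E v)%:R.
Proof. by rewrite mul_mx_diag !mxE. Qed.

Lemma const_mul_hcommon_mx c v : uniform E c ->
  (const_mx 1 *m hcommon_mx : 'rV[R]_n) 0 v = ((c - 1) * hdeg E v)%:R.
Proof.
move=> unifE; rewrite -(sum_hcommon v unifE) natr_sum mxE (bigD1 v) //=.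
rewrite !mxE eqxx mulr0 add0r; apply: eq_bigr => w wv.
by rewrite !mxE mul1r (negbTE wv) hcommonC.
Qed.

Variables (k : nat) (f : {ffun 'I_n -> 'I_k}).

Definition color_row j : 'rV[R]_n := \row_w (f w == j)%:R.

Lemma sum_color_row : \sum_j color_row j = const_mx 1 :> 'rV[R]_n.
Proof.
apply/rowP => w; rewrite summxE !mxE (bigD1 (f w)) //= mxE eqxx big1 ?addr0 //.
by move=> j; rewrite mxE eq_sym => /negbTE ->.
Qed.

Lemma color_row_mul_hcommon_mx j v : proper_strong E f ->
  (color_row j *m hcommon_mx) 0 v
    = if f v == j then 0 else (hcolor_deg E f v j)%:R.
Proof.
move=> f_proper; rewrite mxE.
case: eqP => [fvj | /eqP fvj].
  apply: big1 => w _; rewrite !mxE; case: (eqVneq (f w) j) => [fwj | _]; last by rewrite mul0r.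
  case: ifP => [_ | /negbT wv]; first by rewrite mulr0.
  by rewrite (hcommon_same_color f_proper wv) ?mulr0 // fvj fwj.
rewrite -(sum_hcommon_color f_proper fvj) natr_sum [RHS]big_mkcond; apply: eq_bigr => w _.
rewrite !mxE; case: (eqVneq (f w) j) => [fwj | _]; last by rewrite mul0r.
rewrite mul1r; case: ifP => [/eqP wv | _]; last by rewrite hcommonC.
by move: fvj; rewrite -wv fwj eqxx.
Qed.
End HypergraphMatrices.

Section ColorClassDegrees.
Variables (R : realFieldType) (n c k : nat) (E : {set {set 'I_n}}).
Variable f : {ffun 'I_n -> 'I_k}.
Hypotheses (unifE : uniform E c) (f_proper : proper_strong E f).
Variable mu : R.
Hypothesis mu_crit : (c - 1)%:R + mu * (k%:R - 1) = 0.

Let M := hcommon_mx R E - mu *: hdegmx R E.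
Hypothesis M_psd : forall x : 'rV[R]_n, 0 <= (x *m M *m x^T) 0 0.

Let xi j : 'rV[R]_n := color_row R f j - k%:R^-1 *: const_mx 1.

Let k_neq0 (j : 'I_k) : k%:R != 0 :> R.
Proof. by rewrite pnatr_eq0 -lt0n (leq_ltn_trans (leq0n j) (ltn_ord j)). Qed.

Let xi_entry j v : xi j 0 v = (f v == j)%:R - k%:R^-1.
Proof. by rewrite !mxE mulr1. Qed.

Let xi_mul_M j v : (xi j *m M) 0 v =
  (color_row R f j *m hcommon_mx R E) 0 v - k%:R^-1 * ((c - 1) * hdeg E v)%:R
  - mu * (((f v == j)%:R - k%:R^-1) * (hdeg E v)%:R).
Proof.
rewrite mulmxBr -scalemxAr [(_ - _ : 'rV_n) 0 v]mxE [(- _ : 'rV_n) 0 v]mxE.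
rewrite [(_ *: _ : 'rV_n) 0 v]mxE mul_hdegmx mulmxBl -scalemxAl.
rewrite [(_ - _ : 'rV_n) 0 v]mxE [(- _ : 'rV_n) 0 v]mxE [(_ *: _ : 'rV_n) 0 v]mxE.
by rewrite (const_mul_hcommon_mx R v unifE) xi_entry.
Qed.

Let xi_quad_vertex v : \sum_j (xi j) 0 v * (xi j *m M) 0 v = 0.
Proof.
pose g j := (color_row R f j *m hcommon_mx R E) 0 v.
have g_self : g (f v) = 0 by rewrite /g color_row_mul_hcommon_mx // eqxx.
have g_sum : \sum_j g j = ((c - 1) * hdeg E v)%:R.
  by rewrite -(const_mul_hcommon_mx R v unifE) -(sum_color_row R f) mulmx_suml summxE.
rewrite (eq_bigr (fun j => ((f v == j)%:R - k%:R^-1) * (g j - k%:R^-1 * \sum_i g i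
           - mu * (hdeg E v)%:R * ((f v == j)%:R - k%:R^-1)))); last first.
  by move=> j _; rewrite xi_entry xi_mul_M g_sum /g; ring.
rewrite (sum_centered_indicator _ (k_neq0 (f v)) g_self) g_sum natrM.
have -> : (c - 1)%:R * (hdeg E v)%:R + mu * (hdeg E v)%:R * (k%:R - 1)
          = (hdeg E v)%:R * ((c - 1)%:R + mu * (k%:R - 1)) :> R by ring.
by rewrite mu_crit mulr0 oppr0 mul0r.
Qed.

Lemma hcolor_deg_balanced v j : f v != j ->
  k%:R * (hcolor_deg E f v j)%:R = ((c - 1)%:R - mu) * (hdeg E v)%:R.
Proof.
move=> fvj.
have M_sym : M^T = M by rewrite /M linearB linearZ /= tr_hcommon_mx tr_diag_mx.
have quad_sum : \sum_j (xi j *m M *m (xi j)^T) 0 0 = 0.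
  under eq_bigr => i _ do rewrite mxE.
  rewrite exchange_big /=; apply: big1 => w _; rewrite -[RHS](xi_quad_vertex w).
  by apply: eq_bigr => i _; rewrite mulrC [_^T _ _]mxE.
have xiM0 : xi j *m M = 0.
  apply: psd_quad_eq0_mulmx M_sym M_psd _ _.
  by move/psumr_eq0P: quad_sum => /(_ (fun i _ => M_psd (xi i))); apply.
have := congr1 (fun y : 'rV_n => y 0 v) xiM0.
rewrite /= xi_mul_M color_row_mul_hcommon_mx // (negbTE fvj) mxE natrM /= => h.
apply/eqP; rewrite -subr_eq0 -(mulr0 k%:R) -h; apply/eqP.
by field; apply: k_neq0 j.
Qed.
End ColorClassDegrees.

Lemma chi_formula_crit (F : numFieldType) (c k : nat) (lam : F) :
  (0 < k)%N -> (0 < c)%N -> k%:R = (c%:R - lam) / (1 - lam) ->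
  (c - 1)%:R + (lam - 1) * (k%:R - 1) = 0.
Proof.
move=> k_gt0 c_gt0 k_eq.
have lam_neq1 : 1 - lam != 0.
  apply: contraTneq k_gt0 => lam1; move: k_eq; rewrite lam1 invr0 mulr0 => /eqP.
  by rewrite pnatr_eq0 => /eqP ->.
have c_eq : c%:R = k%:R * (1 - lam) + lam by rewrite k_eq mulfVK ?subrK.
by rewrite natrB // c_eq; ring.
Qed.

Theorem mainTheorem10 (R : realType) (n c : nat) (E : {set {set 'I_n}})
  (lam1 : R) :
  (2 <= c)%N ->
  uniform E c ->
  E != set0 ->
  (forall v, (0 < hdeg E v)%N) ->
  (* lam1 is the smallest eigenvalue of the normalized Laplacian *)
  eigenvalue (hlaplacian R E) lam1 ->
  (forall mu, eigenvalue (hlaplacian R E) mu -> lam1 <= mu) ->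
  (strong_chi E)%:R = (c%:R - lam1) / (1 - lam1) ->
  forall f : {ffun 'I_n -> 'I_(strong_chi E)}, proper_strong E f ->
  forall (v : 'I_n) (i : 'I_(strong_chi E)),
    (#|[set e in E | (v \in e) && [exists w in e, f w == i]]|%:R : R) =
    if f v != i then ((c - 1)%:R * (hdeg E v)%:R) / ((strong_chi E)%:R - 1)
    else (hdeg E v)%:R.
Proof.
move=> c_ge2 unifE _ deg_gt0 _ lam1_min; move: (strong_chi E) => k chiE f f_proper v i.
rewrite -/(hcolor_deg E f v i).
have [<-|fvi] := eqVneq (f v) i; first by rewrite hcolor_deg_self.
have k_gt0 : (0 < k)%N := leq_ltn_trans (leq0n i) (ltn_ord i).
have mu_crit := chi_formula_crit k_gt0 (ltnW c_ge2) chiE.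
have M_psd (x : 'rV[R]_n) :
    0 <= (x *m (hcommon_mx R E - (lam1 - 1) *: hdegmx R E) *m x^T) 0 0.
  apply: (quad_sub_diag_ge0 _ (tr_hcommon_mx R E)) => [w | s].
    by rewrite mxE ltr0n deg_gt0.
  by move=> /(eigenvalue_add_scalar 1); rewrite -hlaplacianE => /lam1_min; lra.
have k_neq1 : k%:R - 1 != 0 :> R.
  apply: contraTneq c_ge2 => k1; move: mu_crit; rewrite k1 mulr0 addr0 => /eqP.
  by rewrite pnatr_eq0 subn_eq0 -ltnNge.
have mu_eq : lam1 - 1 = - ((c - 1)%:R) / (k%:R - 1).
  by move/eqP: mu_crit; rewrite addrC addr_eq0 => /eqP <-; rewrite mulfK.
apply: (@mulfI _ k%:R); first by rewrite pnatr_eq0 -lt0n.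
rewrite (hcolor_deg_balanced unifE f_proper mu_crit M_psd fvi) mu_eq.
by field; rewrite k_neq1.
Qed.
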